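(* Let $n\ge2$, $p\in(0,1)$, let $X_1,\dots,X_{n-2}$ be i.i.d. with $\mathbb P(X_i=-1)=p$, $\mathbb P(X_i=1)=1-p$, and let $W_k=\sum_{i=1}^kX_i$ for $0\le k\le n-2$. Then $$\tilde T_n^p\stackrel{d}{=}\frac n2+\max_{0\le k\le n-2}W_k-\frac{W_{n-2}}{2}.$$
   Context: For $n\ge2$, $p\in(0,1)$, $\tilde\Omega_n^p$ is the probability space of strings $\omega\in\{0,1\}^n$ with $\omega_1=0$, $\omega_n=1$ and $\omega_2,\dots,\omega_{n-1}$ independent, each $1$ with probability $p$ and $0$ with probability $1-p$. One step of the evolution replaces simultaneously every occurrence of the consecutive substring ''01'' by ''10''; $\tilde T_n^p(\omega)$ is the number of steps needed to reach a string of the form $1\cdots10\cdots0$. $\stackrel d=$ denotes equality in distribution. *)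

From HB Require Import structures.
From mathcomp Require Import all_boot all_order all_algebra.
Set Implicit Arguments. Unset Strict Implicit. Unset Printing Implicit Defensive.
Import Order.TTheory GRing.Theory Num.Theory.

(* One step of the evolution: simultaneously replace every "01" by "10".
   (false = 0, true = 1). Occurrences of "01" never overlap, so a
   left-to-right scan realises the simultaneous replacement. *)
Fixpoint step (s : seq bool) : seq bool :=
  match s with
  | false :: true :: r => true :: false :: step r
  | x :: r => x :: step r
  | [::] => [::]
  end.

Definition isfinal (s : seq bool) : bool :=
  s == nseq (count id s) true ++ nseq (size s - count id s) false.

Definition hits (s : seq bool) (t : nat) : bool :=
  isfinal (iter t step s) && all (fun j => ~~ isfinal (iter j step s)) (iota 0 t).

(* The string omega in Omega~_n^p built from the n-2 free middle bits b:
   omega = 0 b_1 ... b_{n-2} 1. *)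
Definition omega_of (m : nat) (b : {ffun 'I_m -> bool}) : seq bool :=
  false :: rcons [seq b i | i <- enum 'I_m] true.

Local Open Scope ring_scope.

Definition weight (R : realFieldType) (p : R) (m : nat) (b : {ffun 'I_m -> bool}) : R :=
  \prod_(i < m) (if b i then p else 1 - p).

Definition prob (R : realFieldType) (p : R) (m : nat) (E : pred {ffun 'I_m -> bool}) : R :=
  \sum_(b | E b) weight p b.

(* The random walk: X_i = -1 if b_i (probability p), X_i = 1 otherwise
   (probability 1-p), indices i = 1..m shifted to 0..m-1. *)
Definition Xstep (R : realFieldType) (m : nat) (b : {ffun 'I_m -> bool}) (i : 'I_m) : R :=
  if b i then -1 else 1.

Definition W (R : realFieldType) (m : nat) (b : {ffun 'I_m -> bool}) (k : nat) : R :=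
  \sum_(i < m | (i < k)%N) Xstep R b i.

(* max_{0 <= k <= m} W_k  (W_0 = 0, so 0 is a harmless neutral element) *)
Definition maxW (R : realFieldType) (m : nat) (b : {ffun 'I_m -> bool}) : R :=
  \big[Num.max/0]_(k < m.+1) W R b k.

Definition rhs (R : realFieldType) (n : nat) (b : {ffun 'I_(n - 2) -> bool}) : R :=
  n%:R / 2 + maxW R b - W R b (n - 2) / 2.

From HB Require Import structures.
From mathcomp Require Import all_boot all_order all_algebra.
From mathcomp Require Import zify ring lra.
Import Order.TTheory GRing.Theory Num.Theory.

Set Implicit Arguments.
Unset Strict Implicit.
Unset Printing Implicit Defensive.

(* Proof idea.  Read a string left to right and attach to every 1 that has at
   least one 0 to its left the number

        (number of 0s to its left) + (number of 1s to its right).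

   The maximum of these numbers, [potential 0 s], is exactly the number of
   steps needed to sort s: it is 0 iff s is of the form 1...10...0, and one
   step of the evolution decreases it by exactly one ([potential_step]).
   Hence the hitting time of a final string is [potential 0 s].

   For omega = 0 c 1 the maximum is attained at the final 1 or is governed by
   the walk that goes up at each 0 and down at each 1 of c; this gives
   [potential 0 omega = 1 + #1(c) + max_k W_k] ([potential_omega]).  Since
   n = #0(c) + #1(c) + 2 and W_{n-2} = #0(c) - #1(c), this number equals the
   right-hand side n/2 + max_k W_k - W_{n-2}/2.  So the two random variables
   are equal pointwise on the sample space, which gives both claims. *)

Lemma step_nil : step [::] = [::]. Proof. by []. Qed.
Lemma step_0 : step [:: false] = [:: false]. Proof. by []. Qed.
Lemma step_1 r : step (true :: r) = true :: step r. Proof. by []. Qed.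
Lemma step_01 r : step [:: false, true & r] = [:: true, false & step r].
Proof. by []. Qed.
Lemma step_00 r : step [:: false, false & r] = false :: step (false :: r).
Proof. by []. Qed.

Arguments step : simpl never.

Lemma step_ind (P : seq bool -> Prop) :
  P [::] -> P [:: false] ->
  (forall r, P r -> P (true :: r)) ->
  (forall r, P r -> P [:: false, true & r]) ->
  (forall r, P (false :: r) -> P [:: false, false & r]) ->
  forall s, P s.
Proof.
move=> Pnil P0 P1 P01 P00 s.
elim: {s}(size s) {-2}s (leqnn (size s)) => [|k IH] [|x r] //= Hs.
case: x; first by apply: P1; apply: IH.
case: r Hs => [|[] r] Hs //.
- by apply: P01; apply: IH; move: Hs => /=; lia.
- by apply: P00; apply: IH; move: Hs => /=; lia.
Qed.

Lemma count_step s : count id (step s) = count id s.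
Proof.
elim/step_ind: s => [||r IH|r IH|r IH] //;
  by rewrite ?step_1 ?step_01 ?step_00 /= IH.
Qed.

(* [potential z s]: the maximum, over the 1s of s preceded by at least one 0
   (counting the z zeros of an already scanned prefix), of the number of 0s
   to the left plus the number of 1s to the right; 0 if there is no such 1. *)
Fixpoint potential (z : nat) (s : seq bool) : nat :=
  match s with
  | [::] => 0
  | false :: r => potential z.+1 r
  | true :: r => maxn (if 0 < z then z + count id r else 0) (potential z r)
  end.

Definition lead_term (z : nat) (s : seq bool) : nat :=
  if (0 < z) && head false s then z + count id s - 1 else 0.

Lemma potential_count0 z r : count id r = 0 -> potential z r = 0.
Proof. by elim: r z => [|[] r IH] z //= Hc; rewrite IH. Qed.

(* The first 1 of r has at least z zeros to its left and #1(r) - 1 ones to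
   its right, so the potential is at least z + #1(r) - 1. *)
Lemma potential_ge z r :
  0 < count id r -> 0 < z -> z + count id r <= (potential z r).+1.
Proof.
elim: r z => [|[] r IH] z //= Hc Hz.
- rewrite Hz; case: (posnP (count id r)) => [->|H0]; first lia.
  by have := IH z H0 Hz; lia.
- by have := IH z.+1 Hc isT; lia.
Qed.

(* One step decreases every term by one, except the term of a leading 1 of
   s: the scanned prefix is not part of the step, so that 1 cannot move. *)
Lemma potential_step z s :
  potential z (step s) = maxn (lead_term z s) (potential z s - 1).
Proof.
elim/step_ind: s z => [||r IH|r IH|r IH] z; rewrite /lead_term.
- by case: z.
- by case: z.
- rewrite step_1 /= IH count_step /lead_term.
  by case: (posnP z) => [->|Hz] /=; [lia | rewrite ?Hz; case: (head false r); lia].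
- rewrite step_01 /= IH count_step /lead_term /=.
  case: (posnP z) => [->|Hz] /=; last by rewrite ?Hz; case: (head false r); lia.
  case: (posnP (count id r)) => [H0|H0].
  + by rewrite (potential_count0 _ H0) H0; case: (head false r); lia.
  + case: r H0 {IH} => [|[] r] H0 //=; first lia.
    by have := @potential_ge 2 r H0 isT; lia.
- by rewrite step_00 /= IH /lead_term /= !andbF.
Qed.

(* From an empty prefix no 1 is leading: each step lowers the potential. *)
Lemma potential0_iter j s : potential 0 (iter j step s) = potential 0 s - j.
Proof.
elim: j => [|j IH] /=; first by rewrite subn0.
by rewrite potential_step /lead_term /= max0n IH; lia.
Qed.

Lemma nseq_count0 r : count id r = 0 -> r = nseq (size r) false.
Proof. by elim: r => [|[] r IH] //= H; rewrite -IH. Qed.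

Lemma isfinal_potential s : isfinal s = (potential 0 s == 0).
Proof.
elim: s => [|[] r IH] //.
- by rewrite /= max0n -IH /isfinal /= add1n subSS eqseq_cons.
- rewrite /isfinal /= add0n.
  case: (posnP (count id r)) => H0.
  + by rewrite H0 potential_count0 //= eqseq_cons -(nseq_count0 H0) !eqxx.
  + have := @potential_ge 1 r H0 isT.
    case: (count id r) H0 => [//|c] _ /= H; rewrite eqseq_cons /=.
    by move: H; case: (potential 1 r).
Qed.

Lemma hits_potential s t : hits s t = (t == potential 0 s).
Proof.
rewrite /hits isfinal_potential potential0_iter subn_eq0.
apply/andP/eqP => [[Hle /allP Hnot] | ->].
- apply/eqP; rewrite eqn_leq Hle andbT leqNgt; apply/negP => Hlt.
  have := Hnot (potential 0 s); rewrite mem_iota add0n Hlt.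
  by rewrite isfinal_potential potential0_iter subnn => /(_ isT).
- split=> //; apply/allP => j; rewrite mem_iota add0n /= => Hj.
  by rewrite isfinal_potential potential0_iter subn_eq0 -ltnNge.
Qed.

(* Maximum over k >= 0 of the partial sums of the walk that goes up at each
   0 and down at each 1 of c, computed from the right. *)
Fixpoint walk_max (c : seq bool) : nat :=
  match c with
  | [::] => 0
  | false :: r => (walk_max r).+1
  | true :: r => walk_max r - 1
  end.

Lemma potential_rcons1 z c :
  0 < z -> potential z (rcons c true) = z + count id c + walk_max c.
Proof.
elim: c z => [|[] c IH] z Hz /=.
- by rewrite Hz !addn0 maxn0.
- by rewrite Hz IH // -cats1 count_cat /=; lia.
- by rewrite IH //; lia.
Qed.

Lemma potential_omega m (b : {ffun 'I_m -> bool}) (c := [seq b i | i <- enum 'I_m]) :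
  potential 0 (omega_of b) = (1 + count id c + walk_max c)%N.
Proof. exact: potential_rcons1. Qed.

Local Open Scope ring_scope.

Definition incr (R : realFieldType) (x : bool) : R := if x then -1 else 1.

Definition walk (R : realFieldType) (c : seq bool) (k : nat) : R :=
  \sum_(0 <= i < size c) (if (i < k)%N then incr R (nth false c i) else 0).

Section Walk.
Variable R : realFieldType.

Lemma walk0 c : walk R c 0 = 0.
Proof. by rewrite /walk big1. Qed.

Lemma walk_cons x c k : walk R (x :: c) k.+1 = incr R x + walk R c k.
Proof. by rewrite /walk /= big_nat_recl. Qed.

Lemma W_walk m (b : {ffun 'I_m -> bool}) k :
  W R b k = walk R [seq b i | i <- enum 'I_m] k.
Proof.
rewrite /W /walk big_mkcond size_map size_enum_ord big_mkord.
by apply: eq_bigr => i _; rewrite (nth_map i) ?size_enum_ord // nth_ord_enum.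
Qed.

Lemma walk_size c : walk R c (size c) = (count negb c)%:R - (count id c)%:R.
Proof.
elim: c => [|x c IH]; first by rewrite walk0 subr0.
by rewrite /= walk_cons IH /incr; case: x; rewrite /= !natrD; ring.
Qed.

Lemma walk_le_max c k : walk R c k <= (walk_max c)%:R.
Proof.
elim: c k => [|x c IH] [|k]; rewrite ?walk0 ?ler0n //; first by rewrite /walk big_nil.
have := IH k; rewrite walk_cons /incr; case: x => /=.
- case: (walk_max c) => [|q] H; first by rewrite sub0n; lra.
  by rewrite subn1 /=; rewrite -addn1 natrD in H; lra.
- by rewrite -addn1 natrD; lra.
Qed.

Lemma walk_max_attained c :
  exists2 k, (k <= size c)%N & walk R c k = (walk_max c)%:R.
Proof.
elim: c => [|x c [k Hk IH]]; first by exists 0%N => //; rewrite walk0.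
case: x => /=.
- case E: (walk_max c) => [|q]; first by exists 0%N => //; rewrite walk0 sub0n.
  by exists k.+1 => //; rewrite walk_cons IH E /incr subn1 /= -addn1 natrD; ring.
- by exists k.+1 => //; rewrite walk_cons IH /incr -addn1 natrD addrC.
Qed.

Lemma bigmax_walk m c : size c = m ->
  \big[Num.max/0]_(k < m.+1) walk R c k = (walk_max c)%:R.
Proof.
move=> Hs; apply/le_anti/andP; split.
- by apply: bigmax_le => [|k _]; [rewrite ler0n | apply: walk_le_max].
- have [k Hk <-] := walk_max_attained c.
  have Hk' : (k < m.+1)%N by rewrite ltnS -Hs.
  exact: (le_bigmax _ _ (Ordinal Hk')).
Qed.

End Walk.

Lemma rhs_potential (R : realFieldType) n (b : {ffun 'I_(n - 2) -> bool}) :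
  (2 <= n)%N -> rhs R b = (potential 0 (omega_of b))%:R.
Proof.
move=> Hn; rewrite potential_omega.
set c := [seq b i | i <- enum 'I_(n - 2)].
have Hs : size c = (n - 2)%N by rewrite size_map size_enum_ord.
have Hn_count : (n = count negb c + count id c + 2)%N.
  have Hcount : (count id c + count negb c = size c)%N by exact: count_predC.
  by rewrite Hs in Hcount; lia.
rewrite /rhs /maxW (eq_bigr (fun k : 'I_(n - 2).+1 => walk R c k)) => [|k _];
  last by rewrite W_walk.
have HnR : n%:R = (count negb c)%:R + (count id c)%:R + 2 :> R.
  by rewrite -!natrD -Hn_count.
rewrite bigmax_walk // W_walk -/c -Hs walk_size HnR !natrD.
by field.
Qed.

(* Both random variables are the same function of b, so they have the same
   law; in particular the right-hand side takes only natural values. *)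
Theorem lemma3p1 (R : realFieldType) (n : nat) (p : R) :
  (2 <= n)%N -> 0 < p -> p < 1 ->
  (forall t : nat,
     prob p (fun b : {ffun 'I_(n - 2) -> bool} => hits (omega_of b) t)
     = prob p (fun b : {ffun 'I_(n - 2) -> bool} => rhs R b == t%:R))
  /\
  (forall x : R, (forall t : nat, x != t%:R) ->
     prob p (fun b : {ffun 'I_(n - 2) -> bool} => rhs R b == x) = 0).
Proof.
move=> Hn _ _; split.
- move=> t; apply: eq_bigl => b.
  by rewrite hits_potential (rhs_potential R b Hn) eqr_nat eq_sym.
- move=> x Hx; rewrite /prob big_pred0 // => b.
  by rewrite (rhs_potential R b Hn) eq_sym; apply/negbTE.
Qed.
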